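(* Let $G$ and $H$ be finite simple graphs, and let $x$ be a vertex of $G$ and $y$ a vertex of $H$. Then the curvature of the strong product at the vertex $(x,y)$ is the product of the curvatures: $$K_{G*H}(x,y)=K_G(x)\,K_H(y).$$
   Context: All graphs are finite simple graphs. A complete subgraph with $k+1$ vertices has dimension $k$; $f_k(G)$ denotes the number of complete subgraphs of $G$ of dimension $k$, and the simplex generating function is $f_G(t)=1+f_0(G)t+f_1(G)t^2+\cdots+f_d(G)t^{d+1}$ (for the empty graph $f_G(t)=1$). For a vertex $x$ of $G$, the unit sphere $S(x)$ is the subgraph of $G$ induced on the set of vertices adjacent to $x$. The curvature of $G$ at $x$ is $K_G(x)=\int_{-1}^0 f_{S(x)}(s)\,ds = 1-\frac{f_0(S(x))}{2}+\frac{f_1(S(x))}{3}-\frac{f_2(S(x))}{4}+\cdots$. The strong product $G*H$ has vertex set $V(G)\times V(H)$, and two distinct vertices $(a,b),(c,d)$ are adjacent iff ($a=c$ or $a$ is adjacent to $c$ in $G$) and ($b=d$ or $b$ is adjacent to $d$ in $H$). *)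

From mathcomp Require Import all_boot all_order all_algebra.
Set Implicit Arguments. Unset Strict Implicit. Unset Printing Implicit Defensive.
Import GRing.Theory Num.Theory.
Local Open Scope ring_scope.

Definition simple_graph (T : finType) (e : rel T) : Prop :=
  symmetric e /\ irreflexive e.

Definition is_clique (T : finType) (e : rel T) (A : {set T}) : bool :=
  [forall x in A, forall y in A, (x != y) ==> e x y].

(* f_k(G): number of complete subgraphs of dimension k (k+1 vertices). *)
Definition fk (T : finType) (e : rel T) (k : nat) : nat :=
  #|[set A : {set T} | is_clique e A && (#|A| == k.+1)%N]|.

Definition sphere_rel (T : finType) (e : rel T) (x : T)
  : rel {y : T | e x y} := fun a b => e (val a) (val b).

(* K(G) for the graph itself: int_{-1}^0 f_G(s) ds
   = 1 - f_0/2 + f_1/3 - ...  (complete subgraphs of dimension k have at most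
   #|T| vertices, so k < #|T| covers all nonzero terms). *)
Definition int_simplex_gf (T : finType) (e : rel T) : rat :=
  1 + \sum_(k < #|T|) (-1) ^+ k.+1 * ((fk e k)%:R / (k.+2)%:R).

Definition curvature (T : finType) (e : rel T) (x : T) : rat :=
  @int_simplex_gf {y : T | e x y} (@sphere_rel T e x).

Definition strong_prod (T1 T2 : finType) (e1 : rel T1) (e2 : rel T2)
  : rel (T1 * T2) :=
  fun a b => [&& a != b, (a.1 == b.1) || e1 a.1 b.1 & (a.2 == b.2) || e2 a.2 b.2].

(* The curvature K_G(x) = \int_{-1}^0 f_{S(x)}(s) ds is the total weight
   w(#|C|) = (-1)^(#|C|+1) / #|C| of the cliques C of G containing x
   ([curvatureE]): a clique of the unit sphere plus x is a clique through x.
   A set of vertices of G * H is a clique iff both its projections are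
   cliques ([strong_prod_clique]), so grouping the cliques through (x, y) by
   their projections (A, B) reduces the theorem to the local identity
     sum of w(#|C|) over C in A x B with projections A, B and (x, y) in C
       = w(#|A|) * w(#|B|)                          ([sum_has_projs_weight]).
   Coordinatewise transpositions show that the left side does not depend on
   the chosen point of A x B; averaging over these points turns it into the
   signed count of the sets with projections A and B, which is computed by
   inclusion-exclusion ([sum_has_projs_sign]) from the alternating subset
   sums of the first section. *)

From mathcomp Require Import all_boot all_order all_algebra.
From mathcomp Require Import perm ring.
Set Implicit Arguments. Unset Strict Implicit. Unset Printing Implicit Defensive.
Import GRing.Theory Num.Theory.
Local Open Scope ring_scope.

Section AlternatingSubsetSums.

Variables (R : comPzRingType) (T : finType).

Lemma sum_subset_sign (X : {set T}) :
  \sum_(Y : {set T} | Y \subset X) (-1 : R) ^+ #|Y| = (X == set0)%:R.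
Proof.
have [->|[x0 x0X]] := set_0Vmem X.
  by rewrite eqxx (big_pred1 set0) ?cards0 // => Y; rewrite subset0.
have -> : (X == set0) = false by apply/negbTE/set0Pn; exists x0.
(* Pair every Y not containing x0 with x0 |: Y; the two terms cancel. *)
rewrite (bigID (fun Y : {set T} => x0 \in Y)) /=.
rewrite (reindex_onto (fun Y => x0 |: Y) (fun Y => Y :\ x0)) /=; last first.
  by move=> Y /andP[_ x0Y]; rewrite setD1K.
rewrite (eq_bigl (fun Y : {set T} => (Y \subset X) && (x0 \notin Y))); last first.
  move=> Y; rewrite setU11 andbT subUset sub1set x0X /=.
  case x0Y: (x0 \in Y) => /=; last by rewrite setU1K ?x0Y ?eqxx ?andbT.
  rewrite andbF; apply/negbTE/negP => /andP[_ /eqP YE].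
  by have := setD11 x0 (x0 |: Y); rewrite YE x0Y.
rewrite -big_split /= big1 // => Y /andP[_ x0Y].
by rewrite cardsU1 x0Y exprS mulN1r addrC subrr.
Qed.

(* Among the subsets of A, only A itself contains A. *)
Lemma sum_subset_supset_sign (A : {set T}) :
  \sum_(Y : {set T} | Y \subset A) (-1 : R) ^+ #|Y| * (A \subset Y)%:R
  = (-1) ^+ #|A|.
Proof.
under eq_bigr => Y _ do rewrite mulr_natr mulrb.
rewrite -big_mkcondr (big_pred1 A) // => Y /=.
by rewrite eq_sym eqEsubset andbC.
Qed.

Lemma eq_subset_sign (X A : {set T}) : X \subset A ->
  (X == A)%:R = \sum_(Y : {set T} | Y \subset A)
                  (-1 : R) ^+ #|Y| * [disjoint Y & X]%:R.
Proof.
move=> XA; under eq_bigr => Y _ do rewrite mulr_natr mulrb.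
rewrite -big_mkcondr /=.
rewrite (eq_bigl (fun Y : {set T} => Y \subset A :\: X)); last first.
  by move=> Y; rewrite subsetD.
by rewrite sum_subset_sign setD_eq0 eqEsubset XA.
Qed.

End AlternatingSubsetSums.

Section Projections.

Variables (T1 T2 : finType).
Implicit Types (A : {set T1}) (B : {set T2}) (C : {set T1 * T2}).

Definition has_projs A B C : bool := (fst @: C == A) && (snd @: C == B).

Lemma has_projs_sub A B C : has_projs A B C -> C \subset setX A B.
Proof.
case/andP=> /eqP <- /eqP <-; apply/subsetP => c cC.
by rewrite inE !imset_f.
Qed.

Lemma fst_sub A B C : C \subset setX A B -> fst @: C \subset A.
Proof.
move/subsetP=> CAB; apply/subsetP => _ /imsetP[c cC ->].
by move: (CAB c cC); rewrite inE => /andP[].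
Qed.

Lemma snd_sub A B C : C \subset setX A B -> snd @: C \subset B.
Proof.
move/subsetP=> CAB; apply/subsetP => _ /imsetP[c cC ->].
by move: (CAB c cC); rewrite inE => /andP[].
Qed.

Lemma subset_setXD A B (A' : {set T1}) (B' : {set T2}) C :
  [&& C \subset setX A B, [disjoint A' & fst @: C] & [disjoint B' & snd @: C]]
  = (C \subset setX (A :\: A') (B :\: B')).
Proof.
apply/and3P/subsetP => [[/subsetP CAB dA dB] c cC | CD].
  move: (CAB c cC); rewrite !inE => /andP[-> ->]; rewrite !andbT.
  by rewrite (disjointFl dA) ?(disjointFl dB) ?imset_f.
split.
- by apply/subsetP => c /CD; rewrite !inE => /andP[/andP[_ ->] /andP[_ ->]].
- rewrite -setI_eq0; apply/eqP/setP => a; rewrite !inE.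
  apply/andP => -[aA' /imsetP[c /CD]]; rewrite !inE => /andP[/andP[+ _] _] aE.
  by rewrite -aE aA'.
- rewrite -setI_eq0; apply/eqP/setP => b; rewrite !inE.
  apply/andP => -[bB' /imsetP[c /CD]]; rewrite !inE => /andP[_ /andP[+ _]] bE.
  by rewrite -bE bB'.
Qed.

(* The signed subsets of A x B whose projections avoid A' and B' are the
   signed subsets of (A \ A') x (B \ B'): they cancel unless this is empty. *)
Lemma sum_setX_disjoint_sign (R : comPzRingType) A B (A' : {set T1}) (B' : {set T2}) :
  \sum_(C : {set T1 * T2} | C \subset setX A B)
    (-1 : R) ^+ #|C| * ([disjoint A' & fst @: C] && [disjoint B' & snd @: C])%:R
  = ((A \subset A') || (B \subset B'))%:R.
Proof.
under eq_bigr do rewrite mulr_natr mulrb.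
rewrite -big_mkcondr /= (eq_bigl (fun C => C \subset setX (A :\: A') (B :\: B')));
  last exact: subset_setXD.
by rewrite sum_subset_sign -cards_eq0 cardsX muln_eq0 !cards_eq0 !setD_eq0.
Qed.

Lemma sum_has_projs_sign (R : comPzRingType) A B :
  \sum_(C | has_projs A B C) (-1 : R) ^+ #|C|
  = (-1) ^+ #|A| * (B == set0)%:R + (A == set0)%:R * (-1) ^+ #|B|
    - (-1) ^+ #|A| * (-1) ^+ #|B|.
Proof.
pose sgn (n : nat) : R := (-1) ^+ n.
have onto_AB : \sum_(C | has_projs A B C) sgn #|C| =
    \sum_(C : {set T1 * T2} | C \subset setX A B)
      sgn #|C| * (fst @: C == A)%:R * (snd @: C == B)%:R.
  rewrite big_mkcond [RHS]big_mkcond; apply: eq_bigr => C _ /=.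
  case: (boolP (has_projs A B C)) => [CAB | nCAB].
    by rewrite has_projs_sub //; case/andP: CAB => -> ->; rewrite !mulr1.
  case: (_ \subset _) => //.
  by case/nandP: nCAB => /negbTE ->; rewrite ?mulr0 ?mul0r.
(* Expand both indicators by inclusion-exclusion over A' in A and B' in B. *)
have expand (C : {set T1 * T2}) : C \subset setX A B ->
    sgn #|C| * (fst @: C == A)%:R * (snd @: C == B)%:R =
    \sum_(A' : {set T1} | A' \subset A) \sum_(B' : {set T2} | B' \subset B)
      sgn #|A'| * sgn #|B'| *
      (sgn #|C| * ([disjoint A' & fst @: C] && [disjoint B' & snd @: C])%:R).
  move=> CAB; rewrite (eq_subset_sign R (fst_sub CAB)).
  rewrite (eq_subset_sign R (snd_sub CAB)) -mulrA big_distrlr mulr_sumr.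
  apply: eq_bigr => A' _; rewrite mulr_sumr; apply: eq_bigr => B' _.
  by rewrite -mulnb natrM /sgn /=; ring.
(* After exchanging the sums, the indicator of A \subset A' or B \subset B'
   splits into products of sums over A' and over B' separately. *)
have split_or (a b : R) (p q : bool) : a * b * (p || q)%:R =
    a * p%:R * b + a * (b * q%:R) - a * p%:R * (b * q%:R).
  by case: p; case: q; rewrite /=; ring.
rewrite onto_AB (eq_bigr _ expand) exchange_big /=.
under eq_bigr => A' _ do rewrite exchange_big /=.
under eq_bigr => A' _ do under eq_bigr => B' _ do
  rewrite -mulr_sumr sum_setX_disjoint_sign split_or.
under eq_bigr => A' _ do rewrite sumrB big_split /=.
rewrite sumrB big_split /= -!big_distrlr /=.
by rewrite sum_subset_supset_sign !sum_subset_sign sum_subset_supset_sign.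
Qed.

End Projections.

Section TranspositionImages.

Variable T : finType.

Lemma tperm_imset (X : {set T}) (a b : T) : a \in X -> b \in X ->
  tperm a b @: X = X.
Proof.
move=> aX bX; apply/eqP; rewrite eqEcard card_imset ?leqnn ?andbT; last exact: perm_inj.
by apply/subsetP => _ /imsetP[c cX ->]; case: tpermP => // ->.
Qed.

Lemma tperm_imset_eq (X Y : {set T}) (a b : T) : a \in X -> b \in X ->
  (tperm a b @: Y == X) = (Y == X).
Proof.
move=> aX bX; apply/eqP/eqP => [YX|->]; last exact: tperm_imset.
have <- : tperm a b @: (tperm a b @: Y) = Y.
  by rewrite -imset_comp (eq_imset _ (tpermK a b)) imset_id.
by rewrite YX tperm_imset.
Qed.

End TranspositionImages.

Section PointedProjections.

Variables (T1 T2 : finType) (A : {set T1}) (B : {set T2}).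

(* The sum over the sets with projections A and B that contain a given point
   p of A x B does not depend on p: the coordinatewise transposition of p
   and q permutes these sets, preserving their cardinality. *)
Lemma sum_has_projs_mem_sym (R : nmodType) (F : nat -> R) (p q : T1 * T2) :
  p \in setX A B -> q \in setX A B ->
  \sum_(C | has_projs A B C && (p \in C)) F #|C|
  = \sum_(C | has_projs A B C && (q \in C)) F #|C|.
Proof.
rewrite !inE => /andP[p1A p2B] /andP[q1A q2B].
pose s (r : T1 * T2) := (tperm p.1 q.1 r.1, tperm p.2 q.2 r.2).
have sK : involutive s by move=> [r1 r2]; rewrite /s /= !tpermK.
have imsK : involutive (fun C : {set T1 * T2} => s @: C).
  by move=> C; rewrite -imset_comp (eq_imset _ sK) imset_id.
rewrite (reindex_inj (inv_inj imsK)) /=.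
apply: eq_big => [C|C _]; last by rewrite card_imset //; exact: inv_inj.
have <- : s q = p by rewrite /s !tpermR; case: (p).
rewrite mem_imset /has_projs; last exact: inv_inj.
have -> : fst @: (s @: C) = tperm p.1 q.1 @: (fst @: C).
  by rewrite -!imset_comp; apply: eq_imset.
have -> : snd @: (s @: C) = tperm p.2 q.2 @: (snd @: C).
  by rewrite -!imset_comp; apply: eq_imset.
by rewrite !tperm_imset_eq.
Qed.

(* Averaging over the points of A x B: each set C with projections A and B
   is counted once for each of its #|C| points. *)
Lemma sum_has_projs_mem (R : nmodType) (F : nat -> R) (p : T1 * T2) :
  p \in setX A B ->
  (\sum_(C | has_projs A B C && (p \in C)) F #|C|) *+ #|setX A B|
  = \sum_(C | has_projs A B C) F #|C| *+ #|C|.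
Proof.
move=> pAB; rewrite -sumr_const.
rewrite (eq_bigr (fun q => \sum_(C | has_projs A B C && (q \in C)) F #|C|));
  last by move=> q qAB; exact: sum_has_projs_mem_sym.
rewrite (exchange_big_dep (has_projs A B)) /=; last by move=> q C _ /andP[].
apply: eq_bigr => C CAB; rewrite -sumr_const; apply: eq_bigl => q.
by rewrite CAB andb_idl //; apply/subsetP/has_projs_sub.
Qed.

End PointedProjections.

(* The weight (-1)^(n+1)/n of a clique with n vertices: the curvature at x is
   the total weight of the cliques containing x. *)
Definition clique_weight (R : numFieldType) (n : nat) : R := (-1) ^+ n.+1 / n%:R.

Lemma sum_has_projs_weight (R : numFieldType) (T1 T2 : finType)
    (A : {set T1}) (B : {set T2}) (p : T1 * T2) : p \in setX A B ->
  \sum_(C | has_projs A B C && (p \in C)) clique_weight R #|C|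
  = clique_weight R #|A| * clique_weight R #|B|.
Proof.
move=> pAB; have /andP[p1A p2B] : (p.1 \in A) && (p.2 \in B) by rewrite inE in pAB.
have nA : A != set0 by apply/set0Pn; exists p.1.
have nB : B != set0 by apply/set0Pn; exists p.2.
have cardA : #|A|%:R != 0 :> R by rewrite pnatr_eq0 cards_eq0.
have cardB : #|B|%:R != 0 :> R by rewrite pnatr_eq0 cards_eq0.
(* A set with projections A and B is nonempty, so its #|C| copies of the
   weight add up to the sign -(-1)^#|C|. *)
have weight_card (C : {set T1 * T2}) : has_projs A B C ->
    clique_weight R #|C| *+ #|C| = - (-1) ^+ #|C|.
  case/andP => /eqP CA _; rewrite -mulr_natr divfK ?exprS ?mulN1r //.
  rewrite pnatr_eq0 cards_eq0; apply: contra nA => /eqP C0.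
  by rewrite -CA C0 imset0.
have := sum_has_projs_mem (clique_weight R) pAB.
rewrite (eq_bigr _ weight_card) sumrN sum_has_projs_sign (negbTE nA) (negbTE nB).
rewrite mulr0 mul0r add0r sub0r opprK cardsX -mulr_natr natrM => sumE.
apply: (mulIf (mulf_neq0 cardA cardB)); rewrite sumE /clique_weight !exprS.
by field; rewrite cardA cardB.
Qed.

Lemma cliqueP (T : finType) (e : rel T) (A : {set T}) :
  reflect (forall u v, u \in A -> v \in A -> u != v -> e u v) (is_clique e A).
Proof.
apply: (iffP forallP) => [cA u v uA vA uv | cA u].
  by move: (cA u); rewrite uA => /forallP/(_ v); rewrite vA uv.
by apply/implyP => uA; apply/forallP => v; apply/implyP => vA; apply/implyP; exact: cA.
Qed.

(* Grouping the cliques by size turns the integral of the simplex generating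
   function into the total weight of the cliques, counted with one extra
   vertex: the term of f_k is the weight of a (k+2)-clique. *)
Lemma int_simplex_gfE (T : finType) (e : rel T) :
  int_simplex_gf e = \sum_(A : {set T} | is_clique e A) clique_weight rat #|A|.+1.
Proof.
rewrite (partition_big (fun A : {set T} => (inord #|A| : 'I_#|T|.+1)) xpredT) //=.
rewrite big_ord_recl /int_simplex_gf; congr (_ + _).
  rewrite (big_pred1 set0) => [|A /=]; first by rewrite cards0 /clique_weight divr1.
  apply/andP/eqP => [[_ /eqP/(congr1 val)] | ->].
    by rewrite /= inordK ?ltnS ?max_card // => /eqP; rewrite cards_eq0 => /eqP.
  split; first by apply/cliqueP => u v; rewrite inE.
  by rewrite cards0; apply/eqP/val_inj; rewrite /= inordK.
apply: eq_bigr => k _.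
rewrite (eq_bigl (fun A => A \in [set A : {set T} | is_clique e A && (#|A| == k.+1)])).
  rewrite (eq_bigr (fun _ => clique_weight rat k.+2)).
    by rewrite sumr_const /fk /clique_weight -mulr_natl !exprS; ring.
  by move=> A; rewrite inE => /andP[_ /eqP ->].
by move=> A; rewrite inE -(inj_eq val_inj) /= inordK ?ltnS ?max_card.
Qed.

(* A clique of the unit sphere S(x) together with x is a clique through x,
   and every clique through x arises this way exactly once. *)
Lemma sum_sphere_cliques (T : finType) (e : rel T) (R : nmodType) (F : nat -> R) (x : T) :
  simple_graph e ->
  \sum_(A : {set {y : T | e x y}} | is_clique (@sphere_rel T e x) A) F #|A|.+1
  = \sum_(C : {set T} | is_clique e C && (x \in C)) F #|C|.
Proof.
case=> esym eirr.
pose cone (A : {set {y : T | e x y}}) := x |: [set val a | a in A].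
pose base (C : {set T}) := [set a : {y : T | e x y} | val a \in C].
have x_notin_val (A : {set {y : T | e x y}}) : x \notin [set val a | a in A].
  by apply/imsetP => -[a _ xa]; have := valP a; rewrite -xa eirr.
have baseK (A : {set {y : T | e x y}}) : base (cone A) = A.
  apply/setP => a; rewrite !inE mem_imset; last exact: val_inj.
  by case: (eqVneq (val a) x) => [ax|] //=; have := valP a; rewrite ax eirr.
rewrite (reindex_onto cone base) => [|C /andP[/cliqueP cC xC]]; last first.
  apply/setP => c; rewrite !inE; case: (eqVneq c x) => [->|cx] //=.
  apply/imsetP/idP => [[a] | cC']; first by rewrite inE => ? ->.
  have exc : e x c by apply: cC => //; rewrite eq_sym.
  by exists (exist _ c exc); rewrite ?inE.
apply: eq_big => [A|A _]; last by rewrite cardsU1 x_notin_val card_imset //; exact: val_inj.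
rewrite baseK eqxx andbT setU11 andbT.
apply/cliqueP/cliqueP => [cA u v | cA u v uA vA uv]; last first.
  by apply: cA; rewrite ?inE ?mem_imset ?uA ?vA ?orbT ?(inj_eq val_inj) //; exact: val_inj.
rewrite !inE => /orP[/eqP -> | /imsetP[a aA ->]] /orP[/eqP -> | /imsetP[b bA ->]].
- by rewrite eqxx.
- by move=> _; exact: (valP b).
- by move=> _; rewrite esym; exact: (valP a).
- by move=> ab; apply: (cA a b aA bA); apply: contraNneq ab => ->.
Qed.

Lemma curvatureE (T : finType) (e : rel T) (x : T) : simple_graph e ->
  curvature e x = \sum_(C : {set T} | is_clique e C && (x \in C)) clique_weight rat #|C|.
Proof. by move=> simple_e; rewrite /curvature int_simplex_gfE sum_sphere_cliques. Qed.

Section StrongProduct.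

Variables (T1 T2 : finType) (e1 : rel T1) (e2 : rel T2).

Lemma strong_prod_simple :
  simple_graph e1 -> simple_graph e2 -> simple_graph (strong_prod e1 e2).
Proof.
move=> [sym1 _] [sym2 _]; split => [a b|a]; last by rewrite /strong_prod eqxx.
by rewrite /strong_prod eq_sym sym1 sym2 (eq_sym a.1) (eq_sym a.2).
Qed.

(* A set of pairs is a clique of G * H exactly when both its projections are
   cliques: this is what makes the curvature multiplicative. *)
Lemma strong_prod_clique (C : {set T1 * T2}) :
  is_clique (strong_prod e1 e2) C = is_clique e1 (fst @: C) && is_clique e2 (snd @: C).
Proof.
apply/cliqueP/andP => [cC | [/cliqueP c1 /cliqueP c2]]; last first.
  move=> u v uC vC uv; rewrite /strong_prod uv /=.
  apply/andP; split.
    by case: eqVneq => //= u1v1; apply: c1 => //; exact: imset_f.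
  by case: eqVneq => //= u2v2; apply: c2 => //; exact: imset_f.
(* Distinct projections come from distinct adjacent pairs, which are then
   adjacent in each coordinate. *)
split; apply/cliqueP => _ _ /imsetP[c cC' ->] /imsetP[d dC ->] cd;
  have c_d : c != d by apply: contraNneq cd => ->.
- have /and3P[_ /orP[/eqP c1d1 | //] _] := cC c d cC' dC c_d.
  by rewrite c1d1 eqxx in cd.
- have /and3P[_ _ /orP[/eqP c2d2 | //]] := cC c d cC' dC c_d.
  by rewrite c2d2 eqxx in cd.
Qed.

End StrongProduct.

Theorem theorem1 (T1 T2 : finType) (e1 : rel T1) (e2 : rel T2)
  (G1 : simple_graph e1) (G2 : simple_graph e2) (x : T1) (y : T2) :
  curvature (strong_prod e1 e2) (x, y) = curvature e1 x * curvature e2 y.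
Proof.
rewrite !curvatureE //; last exact: strong_prod_simple.
rewrite big_distrlr pair_big_dep /=.
rewrite (partition_big (fun C : {set T1 * T2} => (fst @: C, snd @: C))
    (fun AB : {set T1} * {set T2} =>
       (is_clique e1 AB.1 && (x \in AB.1)) && (is_clique e2 AB.2 && (y \in AB.2))))
  /=; last first.
  move=> C /andP[]; rewrite strong_prod_clique => /andP[-> ->] xyC.
  by rewrite !(imset_f _ xyC).
apply: eq_bigr => -[A B] /= /andP[/andP[cA xA] /andP[cB yB]].
rewrite -(@sum_has_projs_weight _ _ _ A B (x, y)) ?inE ?xA //.
apply: eq_bigl => C; rewrite strong_prod_clique xpair_eqE /has_projs.
case: (fst @: C =P A) => [->|_]; last by rewrite !andbF.
case: (snd @: C =P B) => [->|_]; last by rewrite !andbF.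
by rewrite cA cB /= andbT.
Qed.
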